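(* Let $n\ge1$ and $\bar S=\{s_1<s_2<\cdots<s_k\}\subseteq[n-1]$ (possibly empty, $k\ge0$), and put $s_0=0$, $s_{k+1}=n$. Let $\hat\alpha_n^-(\bar S)$ be the number of $\sigma\in\mathcal B_n$ with $\sigma(1)<0$ and $\hat D_B(\sigma)\subseteq\bar S$. Then $$\hat\alpha_n^-(\bar S)=\binom{n}{s_1-s_0,\,s_2-s_1,\,\dots,\,s_{k+1}-s_k}\cdot S_{s_1-s_0}\cdot\prod_{j=2}^{k+1}2^{\,s_j-s_{j-1}}E_{s_j-s_{j-1}}.$$
   Context: $\mathcal B_n$ is the set of signed permutations (bijections $\sigma$ of $\{\pm1,\dots,\pm n\}$ with $\sigma(-i)=-\sigma(i)$), written as words $\sigma(1)\cdots\sigma(n)$ with $\sigma(0)=0$. $\hat D_B(\sigma)$ is the set of $i\in\{0\}\cup[n-1]$ such that either $\sigma(i)<\sigma(i+1)$ and $i$ is even, or $\sigma(i)>\sigma(i+1)$ and $i$ is odd. $E_m$ is the Euler number: the number of permutations $\tau\in\mathfrak S_m$ with $\tau(1)>\tau(2)<\tau(3)>\tau(4)<\cdots$ (so $\sum_{m\ge0}E_m x^m/m!=\tan x+\sec x$); the number of such down-up alternating signed permutations in $\mathcal B_m$ is $2^mE_m$. $S_m$ (number of snakes) is the number of $\tau\in\mathcal B_m$ with $\tau(1)>\tau(2)<\tau(3)>\cdots$ and $\tau(1)>0$. The multinomial coefficient is $\binom{n}{\gamma_1,\dots,\gamma_l}=n!/(\gamma_1!\cdots\gamma_l!)$. 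*)

From HB Require Import structures.
From mathcomp Require Import all_boot all_order all_algebra.
From mathcomp Require Import fingroup perm.
Set Implicit Arguments. Unset Strict Implicit. Unset Printing Implicit Defensive.
Import Order.TTheory GRing.Theory Num.Theory.

(* A signed permutation of [n] is encoded by a permutation p of 'I_n together
   with signs: sigma(j+1) = +-(p j + 1), negative iff the sign bit is true. *)
Definition sperm (n : nat) := ({perm 'I_n} * {ffun 'I_n -> bool})%type.

(* sval s i = sigma(i) for 1 <= i <= n, and sigma(0) = 0 (0 beyond n too). *)
Definition sval n (s : sperm n) (i : nat) : int :=
  match i with
  | 0 => 0%R
  | j.+1 => if insub j is Some o then
              (if s.2 o then (- (Posz (s.1 o).+1))%R else (Posz (s.1 o).+1))
            else 0%R
  end.

Definition inDB n (s : sperm n) (i : nat) : bool :=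
  ((sval s i < sval s i.+1)%R && ~~ odd i) || ((sval s i > sval s i.+1)%R && odd i).

Definition alpha_minus (n : nat) (S : seq nat) : nat :=
  #|[set s : sperm n | (sval s 1 < 0)%R &&
                        all (fun i => inDB s i ==> (i \in S)) (iota 0 n)]|.

(* Euler number: # tau in S_m with tau(1) > tau(2) < tau(3) > ... (0-indexed here) *)
Definition Euler (m : nat) : nat :=
  #|[set t : {perm 'I_m} |
     [forall i : 'I_m, forall j : 'I_m, (val j == (val i).+1) ==>
        (if odd i then t i < t j else t j < t i)]]|.

Definition Snake (m : nat) : nat :=
  #|[set s : sperm m | (0 < sval s 1)%R &&
     all (fun i => if odd i then (sval s i.+1 < sval s i)%R
                            else (sval s i < sval s i.+1)%R) (iota 1 m.-1)]|.

Definition multinomial (n : nat) (g : seq nat) : nat :=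
  n`! %/ \prod_(x <- g) x`!.

Definition gaps (n : nat) (S : seq nat) : seq nat :=
  pairmap (fun a b => b - a) 0 (rcons S n).

From Pilot Require Import Defs.
From mathcomp Require Import all_boot all_order all_algebra.
From mathcomp Require Import fingroup perm.
From mathcomp Require Import zify ring.
Set Implicit Arguments. Unset Strict Implicit. Unset Printing Implicit Defensive.

(* Induction on the last element s of S.  Since s is an allowed position,
   sigma splits into the factors sigma(1..s) and sigma(s+1..n), which are
   constrained independently: after standardization the first one is counted by
   alpha^-_s(S minus s), while the second admits no position of \hat D_B, so it
   must alternate, its first step going down exactly when s is odd.  Alternating
   signed words of length m number 2^m E_m: their pattern of values is a down-up
   permutation and the signs attached to the absolute values are free.  Choosing
   the absolute values of the first factor contributes binom(n, s).  For S empty,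
   negating sigma turns the words counted by alpha^-_n into snakes. *)
Import Order.TTheory GRing.Theory Num.Theory.

Local Notation sval := Defs.sval.
Arguments Defs.sval : simpl never.

Lemma card_preim_onto (A B : finType) (F : A -> B) (D : {set B}) (P : pred B) :
  injective F -> (forall a, F a \in D) -> #|A| = #|D| ->
  #|[set a | P (F a)]| = #|[set b in D | P b]|.
Proof.
move=> injF FD cardA.
have imF : F @: setT = D.
  apply/eqP; rewrite eqEcard card_imset // cardsT cardA leqnn andbT.
  by apply/subsetP=> _ /imsetP[a _ ->].
rewrite -(card_imset _ injF) -imF; apply: eq_card => b; rewrite !inE.
apply/imsetP/andP => [[a] | [/imsetP[a _ ->] Pa]].
  by rewrite inE => Pa ->; rewrite imset_f.
by exists a; rewrite ?inE.
Qed.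

Local Open Scope ring_scope.

Section Rank.
Variables (I : finType) (f : I -> int).

Definition nbelow (x : int) : nat := #|[set j | f j < x]|.
Definition rank (i : I) : nat := nbelow (f i).

Lemma nbelow_le x y : x <= y -> (nbelow x <= nbelow y)%N.
Proof.
move=> le_xy; apply/subset_leq_card/subsetP => j.
by rewrite !inE => /lt_le_trans; apply.
Qed.

Lemma nbelow_lt i x : f i < x -> (rank i < nbelow x)%N.
Proof.
move=> lt_ix; apply: proper_card; rewrite properE; apply/andP; split.
  by apply/subsetP => j; rewrite !inE => /lt_trans; apply.
by apply/subsetPn; exists i; rewrite !inE ?ltxx.
Qed.

Lemma rank_lt i j : (rank i < rank j)%N = (f i < f j).
Proof.
case: (ltP (f i) (f j)) => [/nbelow_lt // | /nbelow_le].
by rewrite leqNgt => /negbTE.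
Qed.

Lemma rank_ltn i : (rank i < #|I|)%N.
Proof.
rewrite -cardsT; apply: proper_card; rewrite properT.
by apply/negP => /eqP/setP/(_ i); rewrite !inE ltxx.
Qed.

Lemma rank_inj : injective f -> injective rank.
Proof.
move=> injf i j eq_ij; apply: injf.
by apply/eqP; rewrite eq_le !leNgt -!rank_lt eq_ij ltnn.
Qed.

Lemma nbelowE x : nbelow x = count (< x) (codom f).
Proof.
rewrite /nbelow cardE count_map -size_filter /enum_mem filter_predT; congr size.
by apply: eq_filter => j; rewrite !inE.
Qed.

End Rank.

Lemma eqfun_from_rank (I : finType) (f g : I -> int) :
  injective f -> injective g -> codom f =i codom g ->
  rank f =1 rank g -> f =1 g.
Proof.
move=> injf injg codom_fg rank_fg.
have nbelow_fg x : nbelow f x = nbelow g x.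
  rewrite !nbelowE; apply/seq.permP/uniq_perm => //;
    by rewrite map_inj_uniq ?enum_uniq.
move=> i; apply/eqP; rewrite eq_le !leNgt.
apply/andP; split; apply/negP => /nbelow_lt.
  by rewrite -nbelow_fg -rank_fg ltnn.
by rewrite nbelow_fg rank_fg ltnn.
Qed.

Definition signed (neg : bool) (x : nat) : int := if neg then - (x.+1)%:Z else (x.+1)%:Z.

Lemma signed_lt e e' x y : (signed e x < signed e' y) =
  if e == e' then (if e then (y < x)%N else (x < y)%N) else e.
Proof. by case: e; case: e'; rewrite /signed /=; lia. Qed.

Lemma signed_lt0 e x : (signed e x < 0) = e.
Proof. by case: e; rewrite /signed; lia. Qed.

Lemma signed_gt0 e x : (0 < signed e x) = ~~ e.
Proof. by case: e; rewrite /signed; lia. Qed.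

Lemma signed_neq0 e x : signed e x != 0.
Proof. by case: e; rewrite /signed; lia. Qed.

Lemma signed_inj e e' x y : signed e x = signed e' y -> e = e' /\ x = y.
Proof. by case: e; case: e'; rewrite /signed; lia. Qed.

Section SignedPermutation.
Variable n : nat.
Implicit Types s t : sperm n.

Definition sv s (i : 'I_n) : int := signed (s.2 i) (s.1 i).

Lemma sval_sv s j (lt_jn : (j < n)%N) : sval s j.+1 = sv s (Ordinal lt_jn).
Proof.
rewrite /sval; case: insubP => [o _ val_o|]; last by rewrite lt_jn.
by have -> : o = Ordinal lt_jn by apply/val_inj.
Qed.

Lemma sval0 s : sval s 0 = 0.
Proof. by []. Qed.

Lemma sval_out s j : (n <= j)%N -> sval s j.+1 = 0.
Proof. by rewrite /sval; case: insubP => [o|] //; rewrite ltnNge => /negbTE ->. Qed.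

Lemma sv_inj s : injective (sv s).
Proof. by move=> i j /signed_inj [_ /val_inj /perm_inj]. Qed.

Lemma sval_neq s k1 k2 :
  k1 != k2 -> (k1 <= n)%N -> (k2 <= n)%N -> sval s k1 != sval s k2.
Proof.
case: k1 => [|j1]; case: k2 => [|j2] // ne_k le_k1 le_k2.
- by rewrite (sval_sv _ le_k2) eq_sym signed_neq0.
- by rewrite (sval_sv _ le_k1) signed_neq0.
rewrite (sval_sv _ le_k1) (sval_sv _ le_k2) (inj_eq (@sv_inj s)).
by rewrite -val_eqE.
Qed.

Lemma sperm_eq s t : sv s =1 sv t -> s = t.
Proof.
case: s t => [p e] [q f] eq_st; have eq_i i := signed_inj (eq_st i).
congr pair; first by apply/permP => i; apply/val_inj; case: (eq_i i).
by apply/ffunP => i; case: (eq_i i).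
Qed.

Definition negs s : sperm n := (s.1, [ffun i => ~~ s.2 i]).

Lemma sval_negs s k : sval (negs s) k = - sval s k.
Proof.
case: k => [|j]; first by rewrite oppr0.
case: (ltnP j n) => [lt_jn | le_nj]; last by rewrite !sval_out ?oppr0.
by rewrite !(sval_sv _ lt_jn) /sv /signed ffunE; case: (s.2 _); rewrite ?opprK.
Qed.

Lemma negs_inj : injective negs.
Proof.
apply: (can_inj (g := negs)) => -[p e].
by congr pair; apply/ffunP => i; rewrite !ffunE negbK.
Qed.

Lemma card_negs (P : pred (sperm n)) : #|[set s | P (negs s)]| = #|[set s | P s]|.
Proof.
rewrite (card_preim_onto (D := setT) P negs_inj) ?cardsT //.
by apply: eq_card => s; rewrite !inE.
Qed.

Lemma card_sperm : #|{: sperm n}| = (n`! * 2 ^ n)%N.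
Proof. by rewrite card_prod card_Sn card_ffun card_bool card_ord. Qed.

End SignedPermutation.

Lemma rank_ord_ltn m (f : 'I_m -> int) i : (rank f i < m)%N.
Proof. by have := rank_ltn f i; rewrite card_ord. Qed.

Definition rank_ord m (f : 'I_m -> int) i : 'I_m := Ordinal (rank_ord_ltn f i).

Lemma rank_ord_inj m (f : 'I_m -> int) : injective f -> injective (rank_ord f).
Proof. by move=> injf i j /(congr1 val) /(rank_inj injf). Qed.

Definition rank_perm m (f : 'I_m -> int) (injf : injective f) : {perm 'I_m} :=
  perm (rank_ord_inj injf).

Lemma rank_permE m (f : 'I_m -> int) (injf : injective f) i :
  val (rank_perm injf i) = rank f i.
Proof. by rewrite permE. Qed.

Lemma rank_perm_lt m (f : 'I_m -> int) (injf : injective f) i j :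
  (rank_perm injf i < rank_perm injf j)%N = (f i < f j).
Proof. by rewrite !rank_permE rank_lt. Qed.

Section Restriction.
Variables (m n : nat) (pos : 'I_m -> 'I_n) (inj_pos : injective pos).
Implicit Types s t : sperm n.

Definition abs_at s (i : 'I_m) : int := (s.1 (pos i))%:Z.

Lemma abs_at_inj s : injective (abs_at s).
Proof. by move=> i j [] /val_inj /perm_inj /inj_pos. Qed.

Definition restr s : sperm m :=
  (rank_perm (@abs_at_inj s), [ffun i => s.2 (pos i)]).

Lemma restr_lt s i j : (sv (restr s) i < sv (restr s) j) = (sv s (pos i) < sv s (pos j)).
Proof. by rewrite /sv !signed_lt /= !ffunE !rank_perm_lt ltz_nat. Qed.

Lemma restr_lt0 s i : (sv (restr s) i < 0) = (sv s (pos i) < 0).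
Proof. by rewrite /sv !signed_lt0 /= ffunE. Qed.

Lemma restr_gt0 s i : (0 < sv (restr s) i) = (0 < sv s (pos i)).
Proof. by rewrite /sv !signed_gt0 /= ffunE. Qed.

Lemma codom_abs_at s x :
  (x \in codom (abs_at s)) = [exists y in [set s.1 (pos i) | i : 'I_m], x == y%:Z].
Proof.
apply/codomP/existsP => [[i ->] | [_ /andP[/imsetP[i _ ->] /eqP ->]]].
  by exists (s.1 (pos i)); rewrite imset_f ?eqxx.
by exists i.
Qed.

Lemma restr_abs_eq s t :
  [set s.1 (pos i) | i : 'I_m] = [set t.1 (pos i) | i : 'I_m] ->
  (restr s).1 = (restr t).1 -> forall i, s.1 (pos i) = t.1 (pos i).
Proof.
move=> eq_img eq_rank i; apply/val_inj/eqP; rewrite -eqz_nat; apply/eqP.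
apply: (eqfun_from_rank (@abs_at_inj s) (@abs_at_inj t)) => [x | j].
  by rewrite !codom_abs_at eq_img.
by have := congr1 (fun p : {perm _} => val (p j)) eq_rank; rewrite /= !rank_permE.
Qed.

End Restriction.

Lemma ord_shift_proof d m n (le_dmn : (d + m <= n)%N) (i : 'I_m) : (d + i < n)%N.
Proof. by move: (ltn_ord i); lia. Qed.

Definition ord_shift d m n (le_dmn : (d + m <= n)%N) (i : 'I_m) : 'I_n :=
  Ordinal (ord_shift_proof le_dmn i).

Lemma ord_shift_inj d m n (le_dmn : (d + m <= n)%N) : injective (ord_shift le_dmn).
Proof. by move=> i j /(congr1 val) /addnI /val_inj. Qed.

Definition window d m n (le_dmn : (d + m <= n)%N) (s : sperm n) : sperm m :=
  restr (ord_shift_inj (le_dmn:=le_dmn)) s.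

Section Window.
Variables (d m n : nat) (le_dmn : (d + m <= n)%N) (s : sperm n).
Let w := window le_dmn s.

Lemma sval_window k (lt_km : (k < m)%N) :
  sval s (d + k).+1 = sv s (ord_shift le_dmn (Ordinal lt_km)).
Proof. exact: sval_sv. Qed.

Lemma window_lt k1 k2 : (0 < k1 <= m)%N -> (0 < k2 <= m)%N ->
  (sval w k1 < sval w k2) = (sval s (d + k1) < sval s (d + k2)).
Proof.
case: k1 k2 => [|j1] [|j2] // /andP[_ lt_j1] /andP[_ lt_j2].
by rewrite !addnS !(sval_sv _ lt_j1) !(sval_sv _ lt_j2) !sval_window restr_lt.
Qed.

Lemma window_sign k : (0 < k <= m)%N ->
  (sval w k < 0) = (sval s (d + k) < 0) /\ (0 < sval w k) = (0 < sval s (d + k)).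
Proof.
case: k => [|j] // /andP[_ lt_j].
by rewrite addnS (sval_sv _ lt_j) sval_window restr_lt0 restr_gt0.
Qed.

End Window.

Lemma prefix_lt m n (le_mn : (0 + m <= n)%N) (s : sperm n) k1 k2 :
  (k1 <= m)%N -> (k2 <= m)%N ->
  (sval (window le_mn s) k1 < sval (window le_mn s) k2) =
  (sval s k1 < sval s k2).
Proof.
case: k1 k2 => [|j1] [|j2] le_k1 le_k2; rewrite ?ltxx //.
- by case: (window_sign le_mn s (k:=j2.+1) le_k2).
- by case: (window_sign le_mn s (k:=j1.+1) le_k1).
exact: (window_lt le_mn s (k1:=j1.+1) (k2:=j2.+1)).
Qed.

Section Split.
Variables (n a : nat) (le_an : (a <= n)%N).

Let le_left : (0 + a <= n)%N := le_an.
Let le_right : (a + (n - a) <= n)%N := eq_leq (subnKC le_an).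
Let left := ord_shift le_left.
Let right := ord_shift le_right.

Definition lblock (s : sperm n) : sperm a := window le_left s.
Definition rblock (s : sperm n) : sperm (n - a) := window le_right s.

Lemma left_or_right (k : 'I_n) : (exists i, k = left i) \/ (exists i, k = right i).
Proof.
case: (ltnP k a) => [lt_ka | le_ak].
  by left; exists (Ordinal lt_ka); apply/val_inj.
have lt_k : (k - a < n - a)%N by move: (ltn_ord k); lia.
by right; exists (Ordinal lt_k); apply/val_inj; rewrite /= subnKC.
Qed.

Definition left_values (s : sperm n) := [set s.1 (left i) | i : 'I_a].

Lemma right_values (s : sperm n) :
  [set s.1 (right i) | i : 'I_(n - a)] = ~: left_values s.
Proof.
apply/setP => y; rewrite inE; apply/imsetP/idP => [[i _ ->] | y_right].
  apply/imsetP => -[j _ /perm_inj /(congr1 val) /=].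
  by move: (ltn_ord j); lia.
case: (left_or_right ((s.1)^-1 y)%g) => -[i def_i].
  by case/imsetP: y_right; exists i; rewrite // -def_i permKV.
by exists i; rewrite // -def_i permKV.
Qed.

Definition split_sperm (s : sperm n) := (left_values s, lblock s, rblock s).

Lemma split_sperm_inj : injective split_sperm.
Proof.
move=> s t eq_st.
have eq_left : left_values s = left_values t := congr1 (fun x => x.1.1) eq_st.
have eq_l : lblock s = lblock t := congr1 (fun x => x.1.2) eq_st.
have eq_r : rblock s = rblock t := congr1 snd eq_st.
have eq_right :
    [set s.1 (right i) | i : 'I_(n - a)] = [set t.1 (right i) | i : 'I_(n - a)].
  by rewrite !right_values eq_left.
have abs_l := restr_abs_eq eq_left (congr1 fst eq_l).
have abs_r := restr_abs_eq eq_right (congr1 fst eq_r).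
have sgn_l i : s.2 (left i) = t.2 (left i).
  by have := congr1 (fun x : sperm a => x.2 i) eq_l; rewrite /= !ffunE.
have sgn_r i : s.2 (right i) = t.2 (right i).
  by have := congr1 (fun x : sperm (n - a) => x.2 i) eq_r; rewrite /= !ffunE.
apply: sperm_eq => k; rewrite /sv.
by case: (left_or_right k) => -[i ->]; rewrite ?abs_l ?sgn_l ?abs_r ?sgn_r.
Qed.

Definition split_range :=
  setX (setX [set B : {set 'I_n} | #|B| == a] [set: sperm a]) [set: sperm (n - a)].

Lemma split_sperm_range s : split_sperm s \in split_range.
Proof.
rewrite !inE /= !andbT /left_values card_imset ?card_ord //.
by move=> i j /perm_inj /ord_shift_inj.
Qed.

Lemma card_split_range : #|split_range| = #|{: sperm n}|.
Proof.
rewrite !cardsX !cardsT card_draws !card_sperm card_ord.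
have -> : (2 ^ n = 2 ^ a * 2 ^ (n - a))%N by rewrite -expnD subnKC.
by rewrite -(bin_fact le_an); ring.
Qed.

Lemma card_split (P : pred (sperm a)) (Q : pred (sperm (n - a))) :
  #|[set s : sperm n | P (lblock s) && Q (rblock s)]| =
  ('C(n, a) * #|[set t | P t]| * #|[set t | Q t]|)%N.
Proof.
rewrite (card_preim_onto (fun x => P x.1.2 && Q x.2) split_sperm_inj
  split_sperm_range (esym card_split_range)).
have -> : [set x in split_range | P x.1.2 && Q x.2] =
    setX (setX [set B : {set 'I_n} | #|B| == a] [set t | P t]) [set t | Q t].
  by apply/setP => -[[B x] y]; rewrite !inE /= !andbT !andbA.
by rewrite !cardsX card_draws card_ord.
Qed.

End Split.

Lemma lt_or_gt_eqb (x y : int) b : x != y ->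
  (if b then x < y else y < x) = ((x < y) == b).
Proof. by case: b => ne_xy; rewrite ?eqbT ?eqbF //; lia. Qed.

Section Zigzag.
Variable m : nat.
Implicit Type t : sperm m.

(* [zigzag down t]: the word t(1) ... t(m) alternates, and its first step is a
   descent iff [down]. *)
Definition zigzag (down : bool) t :=
  all (fun k => (sval t k < sval t k.+1) == odd k (+) down) (iota 1 m.-1).

Definition downup_perm (p : {perm 'I_m}) := [forall i : 'I_m, forall j : 'I_m,
   (val j == (val i).+1) ==> (if odd i then p i < p j else p j < p i)%N].

(* The pattern of values of t together with the sign carried by each absolute
   value; being injective, this is a bijection onto all such pairs. *)
Definition rank_sign t : {perm 'I_m} * {ffun 'I_m -> bool} :=
  (rank_perm (@sv_inj m t), [ffun v => t.2 (t.1^-1 v)%g]).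

Lemma codom_sv t x :
  (x \in codom (sv t)) = [exists v, x == signed ((rank_sign t).2 v) v].
Proof.
apply/codomP/existsP => [[i ->] | [v /eqP ->]].
  by exists (t.1 i); rewrite /= ffunE permK.
by exists (t.1^-1 v)%g; rewrite /sv /= ffunE permKV.
Qed.

Lemma rank_sign_inj : injective rank_sign.
Proof.
move=> s t eq_st; apply: sperm_eq.
apply: (eqfun_from_rank (@sv_inj m s) (@sv_inj m t)) => [x | i].
  by rewrite !codom_sv eq_st.
by have := congr1 (fun p : {perm _} * _ => val (p.1 i)) eq_st; rewrite /= !rank_permE.
Qed.

Lemma zigzag_downup t : zigzag true t = downup_perm (rank_sign t).1.
Proof.
have step_eq (i j : 'I_m) : val j = (val i).+1 ->
    (if odd i then (rank_sign t).1 i < (rank_sign t).1 j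
     else (rank_sign t).1 j < (rank_sign t).1 i)%N =
    ((sval t (val i).+1 < sval t (val i).+2) == odd (val i).+1 (+) true).
  move=> def_j; have lt_j : ((val i).+1 < m)%N by rewrite -def_j ltn_ord.
  rewrite !rank_perm_lt (sval_sv _ (ltn_ord i)) (sval_sv _ lt_j) /= addbT negbK.
  have -> : Ordinal lt_j = j by apply/val_inj.
  have -> : Ordinal (ltn_ord i) = i by apply/val_inj.
  by rewrite lt_or_gt_eqb // (inj_eq (@sv_inj m t)) -val_eqE def_j ltn_eqF.
apply/allP/forallP => [zz i | du].
  apply/forallP => j; apply/implyP => /eqP def_j; rewrite step_eq //.
  by apply: zz; rewrite mem_iota; move: (ltn_ord j); rewrite def_j; lia.
case=> [|k]; rewrite mem_iota // => lt_k.
have lt_k1 : (k < m)%N by lia.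
have lt_k2 : (k.+1 < m)%N by lia.
move: (du (Ordinal lt_k1)) => /forallP/(_ (Ordinal lt_k2))/implyP/(_ (eqxx _)).
by rewrite step_eq.
Qed.

Lemma card_zigzag_down : #|[set t | zigzag true t]| = (2 ^ m * Euler m)%N.
Proof.
rewrite (eq_card (B := [set t | downup_perm (rank_sign t).1])); last first.
  by move=> t; rewrite !inE zigzag_downup.
rewrite (card_preim_onto (D := setT) (fun x => downup_perm x.1) rank_sign_inj) //;
  last by rewrite cardsT.
have -> : [set x in [set: {perm 'I_m} * {ffun 'I_m -> bool}] | downup_perm x.1] =
    setX [set p | downup_perm p] setT.
  by apply/setP => x; rewrite !inE andbT.
by rewrite cardsX cardsT card_ffun card_bool card_ord mulnC.
Qed.

Lemma zigzag_negs t : zigzag false (negs t) = zigzag true t.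
Proof.
apply: eq_in_all => k; rewrite mem_iota => /andP[lt0k ltkm].
have ne_k : sval t k != sval t k.+1 by apply: sval_neq; lia.
rewrite !sval_negs ltrN2 addbT addbF.
by move: ne_k; case: ltgtP; case: (odd k).
Qed.

Lemma card_zigzag down : #|[set t | zigzag down t]| = (2 ^ m * Euler m)%N.
Proof.
case: down; first exact: card_zigzag_down.
rewrite -card_zigzag_down -(card_negs (zigzag false)).
by apply: eq_card => t; rewrite !inE zigzag_negs.
Qed.

End Zigzag.

Lemma inDB_neq n (t : sperm n) i : sval t i != sval t i.+1 ->
  inDB t i = (sval t i < sval t i.+1) (+) odd i.
Proof. by rewrite /inDB; case: (odd i); case: ltgtP. Qed.

Lemma path_ltn_last x p y : path ltn x (rcons p y) -> all (fun z => z < y)%N (x :: p).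
Proof.
elim: p x => [|z p IHp] x /=; first by rewrite andbT.
by case/andP=> lt_xz /IHp /= /andP[lt_zy ->]; rewrite lt_zy (ltn_trans lt_xz lt_zy).
Qed.

Section LastBlock.
Variables (n s : nat) (S : seq nat).
Hypotheses (lt0s : (0 < s)%N) (lt_sn : (s < n)%N) (S_lt_s : all (fun z => z < s)%N S).

Let le_sn : (s <= n)%N := ltnW lt_sn.

Lemma alpha_minus_rcons : alpha_minus n (rcons S s) =
  ('C(n, s) * alpha_minus s S * (2 ^ (n - s) * Euler (n - s)))%N.
Proof.
rewrite -(card_zigzag _ (odd s)) /alpha_minus -card_split //.
apply: eq_card => t; rewrite !inE.
have -> : iota 0 n = iota 0 s ++ s :: map (addn s) (iota 1 (n - s).-1)%N.
  rewrite -iotaDl -[n in iota 0 n](subnKC le_sn) iotaD addn1.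
  by case: (n - s)%N (subn_gt0 s n) => [|k]; rewrite ?lt_sn.
rewrite all_cat /= mem_rcons mem_head implybT andTb all_map -andbA.
congr [&& _, _ & _].
- by rewrite (prefix_lt _ _ (k1:=1) (k2:=0)).
- apply: eq_in_all => i; rewrite mem_iota add0n => lt_is.
  rewrite mem_rcons in_cons (ltn_eqF lt_is) /inDB.
  rewrite (prefix_lt _ _ (k1:=i) (k2:=i.+1)) ?(prefix_lt _ _ (k1:=i.+1) (k2:=i)) //;
    lia.
apply: eq_in_all => k; rewrite mem_iota => /andP[lt0k lt_k] /=.
have notin_S : (s + k \in S) = false.
  by apply/negP => /(allP S_lt_s); lia.
have ne_ks : (s + k == s)%N = false by lia.
rewrite mem_rcons in_cons notin_S ne_ks orbF implybF.
rewrite inDB_neq; last by apply: sval_neq; lia.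
rewrite window_lt ?addnS; [|lia..].
by rewrite oddD; case: (_ < _); case: (odd s); case: (odd k).
Qed.

End LastBlock.

Lemma alpha_minus_nil n : (0 < n)%N -> alpha_minus n [::] = Snake n.
Proof.
case: n => // n _; rewrite /alpha_minus /Snake -card_negs.
apply: eq_card => t; rewrite !inE /= sval_negs oppr_lt0.
case: (ltrP 0 (sval t 1)) => [gt0_t1 | //] /=.
rewrite /inDB /= sval0 !sval_negs oppr_gt0 ltNge (ltW gt0_t1) andbF /=.
apply: eq_in_all => i; rewrite mem_iota => /andP[lt0i lt_in].
have ne_i : sval t i != sval t i.+1 by apply: sval_neq; lia.
rewrite in_nil implybF !sval_negs !ltrN2.
by move: ne_i; case: (odd i); case: ltgtP.
Qed.

Local Open Scope nat_scope.

Lemma gaps_rcons n S s : gaps n (rcons S s) = rcons (gaps s S) (n - s).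
Proof. by rewrite /gaps -cats1 pairmap_cat last_rcons /= cats1. Qed.

Lemma prod_fact_gaps_dvdn n S :
  path ltn 0 (rcons S n) -> \prod_(g <- gaps n S) g`! %| n`!.
Proof.
elim/last_ind: S n => [|S s IHS] n; first by rewrite /gaps big_seq1 subn0.
rewrite rcons_path last_rcons => /andP[path_S lt_sn].
rewrite gaps_rcons big_rcons -(bin_fact (ltnW lt_sn)).
by apply/dvdn_mull/dvdn_mul => //; apply: IHS.
Qed.

Lemma multinomial_rcons n s G : \prod_(g <- G) g`! %| s`! -> s <= n ->
  multinomial n (rcons G (n - s)) = 'C(n, s) * multinomial s G.
Proof.
move=> dvd_G le_sn; rewrite /multinomial big_rcons -(bin_fact le_sn).
set P := \prod_(g <- G) g`!; set q := s`! %/ P.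
have gt0_P : 0 < P by apply: prodn_gt0 => g; apply: fact_gt0.
rewrite -{1}(divnK dvd_G) -/q.
have -> : 'C(n, s) * (q * P * (n - s)`!) = 'C(n, s) * q * (P * (n - s)`!) by ring.
by rewrite mulnK // muln_gt0 gt0_P fact_gt0.
Qed.

Theorem lemma3p1 (n : nat) (S : seq nat) :
  1 <= n ->
  path ltn 0 (rcons S n) ->
  alpha_minus n S =
    multinomial n (gaps n S) * Snake (head 0 (gaps n S)) *
    \prod_(g <- behead (gaps n S)) (2 ^ g * Euler g).
Proof.
elim/last_ind: S n => [|S s IHS] n lt0n path_S.
  rewrite alpha_minus_nil // /multinomial /gaps /= big_seq1 subn0 divnn fact_gt0.
  by rewrite big_nil muln1 mul1n.
have := path_S; rewrite rcons_path last_rcons => /andP[path_s lt_sn].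
have /andP[lt0s S_lt_s] := path_ltn_last path_s.
rewrite alpha_minus_rcons // IHS // gaps_rcons multinomial_rcons ?(ltnW lt_sn) //;
  last exact: prod_fact_gaps_dvdn.
have : 0 < size (gaps s S) by rewrite size_pairmap size_rcons.
by case: (gaps s S) => [|g G] //= _; rewrite big_rcons /=; ring.
Qed.
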